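(* Let $r\ge 1$, let $M=(v_1,\dots,v_n)$ be a finite list of nonzero vectors generating $\mathbb{F}_2^r$, let $G=G(\mathbb{F}_2^r,M)$, and let $\lambda_u=n-\sum_{i=1}^n(-1)^{u\cdot v_i}$ for $u\in\mathbb{F}_2^r$. For $1\le j\le r$, the additive order of the class of $x_j-1$ in $$R(G)=\mathbb{Z}[x_1,\dots,x_r]\Big/\Big(x_1^2-1,\dots,x_r^2-1,\ n-\sum_{i=1}^n\prod_{k=1}^r x_k^{(v_i)_k}\Big)$$ equals the minimum positive integer $C$ such that for every $v\in\mathbb{F}_2^r$, $$\frac{C}{2^{r-2}}\sum_{\substack{u\in\mathbb{F}_2^r:\ u\cdot v=1,\ u_j=1}}\frac{1}{\lambda_u}\in\mathbb{Z}.$$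
   Context: The Cayley graph $G$ has vertex set $\mathbb{F}_2^r$ and Laplacian $L(G)$ indexed by $\mathbb{F}_2^r$ with $L(G)_{u,u}=n$ and $L(G)_{u,w}=-\#\{i:u+v_i=w\}$ for $u\ne w$. The $\lambda_u$ are the eigenvalues of $L(G)$, and $\lambda_u>0$ for $u\neq 0$. As abelian groups, $R(G)\cong\operatorname{coker}L(G)$ via identifying the monomial $\prod_k x_k^{w_k}$ ($w\in\mathbb{F}_2^r$) with the standard basis vector $e_w\in\mathbb{Z}^{2^r}$; the class of $x_j-1$ has finite additive order. *)

From HB Require Import structures.
From mathcomp Require Import all_boot all_order all_algebra.
From mathcomp Require Import mpoly.
Set Implicit Arguments. Unset Strict Implicit. Unset Printing Implicit Defensive.
Import Order.TTheory GRing.Theory Num.Theory.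
Local Open Scope ring_scope.

(* Vectors of F_2^r are row vectors 'rV['F_2]_r; the list M = (v_1,...,v_n)
   is a function v : 'I_n -> 'rV['F_2]_r. *)

Definition dotF2 (r : nat) (u w : 'rV['F_2]_r) : 'F_2 :=
  \sum_(k < r) u 0 k * w 0 k.

Definition lambdaF2 (r n : nat) (v : 'I_n -> 'rV['F_2]_r) (u : 'rV['F_2]_r) : rat :=
  n%:R - \sum_(i < n) (-1) ^+ (nat_of_ord (dotF2 u (v i))).

Definition monoF2 (r : nat) (w : 'rV['F_2]_r) : {mpoly int[r]} :=
  \prod_(k < r) 'X_k ^+ (nat_of_ord (w 0 k)).

Definition in_RG_ideal (r n : nat) (v : 'I_n -> 'rV['F_2]_r) (p : {mpoly int[r]}) : Prop :=
  exists (q : 'I_r -> {mpoly int[r]}) (q0 : {mpoly int[r]}),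
    p = \sum_(k < r) q k * ('X_k ^+ 2 - 1)
        + q0 * (n%:R - \sum_(i < n) monoF2 (v i)).

Definition is_addorder_xj (r n : nat) (v : 'I_n -> 'rV['F_2]_r) (j : 'I_r) (C : nat) : Prop :=
  (0 < C)%N /\ in_RG_ideal v (C%:R * ('X_j - 1)) /\
  (forall C' : nat, (0 < C')%N -> (C' < C)%N -> ~ in_RG_ideal v (C'%:R * ('X_j - 1))).

Definition integrality_cond (r n : nat) (v : 'I_n -> 'rV['F_2]_r) (j : 'I_r) (C : nat) : Prop :=
  forall w : 'rV['F_2]_r,
    (C%:R / (2%:R ^ (r%:Z - 2)) *
      \sum_(u : 'rV['F_2]_r | (dotF2 u w == 1) && (u 0 j == 1)) (lambdaF2 v u)^-1 : rat)
    \is a Num.int.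

Definition least_pos (P : nat -> Prop) (C : nat) : Prop :=
  (0 < C)%N /\ P C /\ (forall C' : nat, (0 < C')%N -> (C' < C)%N -> ~ P C').

From HB Require Import structures.
From mathcomp Require Import all_boot all_order all_algebra.
From mathcomp Require Import mpoly.
From mathcomp Require Import ring.
Import Order.TTheory GRing.Theory Num.Theory.
Local Open Scope ring_scope.
Set Implicit Arguments. Unset Strict Implicit. Unset Printing Implicit Defensive.

(* Modulo the relations x_k^2 = 1, Z[x_1,...,x_r] is the group ring Z[F_2^r],
   and the characters chi_u : x^a |-> (-1)^(u.a) turn multiplication by
   Delta = n - sum_i x^(v_i) into multiplication by lambda_u, which is nonzero
   for u <> 0 because the v_i span F_2^r.  If C (x_j - 1) = q Delta in the
   group ring, then chi_u(q) = - C (1 - chi_u(e_j)) / lambda_u for u <> 0, and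
   Fourier inversion identifies the integrality quantity K_C(w) with q_w - q_0,
   a difference of two integer coefficients of q.  Conversely, if every K_C(w)
   is an integer, then q = sum_w K_C(w) x^w works: on the Fourier side K_C
   solves n K(b) - sum_i K(b + v_i) = C ([b = e_j] - [b = 0]).  Hence the
   additive order of x_j - 1 and the least admissible C are both the least
   positive element of one and the same set. *)

Lemma F2_cases (x : 'F_2) : x = 0 \/ x = 1.
Proof. by case: x => [[|[|k]] Hk] //; [left | right]; apply: val_inj. Qed.

Lemma F2_natr (x : 'F_2) : (x : nat)%:R = x.
Proof. by case: (F2_cases x) => ->; apply: val_inj. Qed.

Section SignF2.
Variable R : ringType.

Definition signF2 (x : 'F_2) : R := (-1) ^+ x.

Lemma signF2_0 : signF2 0 = 1. Proof. exact: expr0. Qed.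

Lemma signF2_1 : signF2 1 = -1. Proof. exact: expr1. Qed.

Lemma signF2D (x y : 'F_2) : signF2 (x + y) = signF2 x * signF2 y.
Proof.
case: (F2_cases x) => ->; case: (F2_cases y) => ->;
  by rewrite ?add0r ?addr0 ?signF2_0 ?mul1r ?mulr1 // signF2_1 mulrNN mulr1.
Qed.

Lemma signF2_sum I (s : seq I) (P : pred I) (F : I -> 'F_2) :
  signF2 (\sum_(i <- s | P i) F i) = \prod_(i <- s | P i) signF2 (F i).
Proof. exact: (big_morph signF2 signF2D signF2_0). Qed.

Lemma signF2X (x : 'F_2) (m : nat) : signF2 x ^+ m = signF2 (x * m%:R).
Proof.
elim: m => [|m IHm]; first by rewrite mulr0 signF2_0.
by rewrite exprS IHm mulrS mulrDr mulr1 signF2D.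
Qed.

Lemma indicatorF2 (x : 'F_2) : (x == 1)%:R *+ 2 = 1 - signF2 x.
Proof.
by case: (F2_cases x) => ->; rewrite ?signF2_0 ?signF2_1 /= ?subrr ?opprK ?mulr2n ?addr0.
Qed.

End SignF2.

Section Characters.
Variable r : nat.
Local Notation U := 'rV['F_2]_r.

Lemma dotC (u a : U) : dotF2 u a = dotF2 a u.
Proof. by apply: eq_bigr => k _; rewrite mulrC. Qed.

Lemma dotDr (u a b : U) : dotF2 u (a + b) = dotF2 u a + dotF2 u b.
Proof. by rewrite /dotF2 -big_split; apply: eq_bigr => k _; rewrite mxE mulrDr. Qed.

Lemma dotDl (u a b : U) : dotF2 (a + b) u = dotF2 a u + dotF2 b u.
Proof. by rewrite !(dotC _ u) dotDr. Qed.

Lemma dot0r (u : U) : dotF2 u 0 = 0.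
Proof. by rewrite /dotF2 big1 // => k _; rewrite mxE mulr0. Qed.

Lemma dot0l (u : U) : dotF2 0 u = 0.
Proof. by rewrite dotC dot0r. Qed.

Lemma dotZr (u a : U) (c : 'F_2) : dotF2 u (c *: a) = c * dotF2 u a.
Proof. by rewrite /dotF2 mulr_sumr; apply: eq_bigr => k _; rewrite mxE mulrCA. Qed.

Lemma dot_sumr I (s : seq I) (P : pred I) (F : I -> U) (u : U) :
  dotF2 u (\sum_(i <- s | P i) F i) = \sum_(i <- s | P i) dotF2 u (F i).
Proof. exact: (big_morph (dotF2 u) (dotDr u) (dot0r u)). Qed.

Lemma dot_delta (u : U) (k : 'I_r) : dotF2 u (delta_mx 0 k) = u 0 k.
Proof.
rewrite /dotF2 (bigD1 k) //= big1 ?addr0 => [|l /negbTE nlk].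
  by rewrite mxE !eqxx mulr1.
by rewrite mxE nlk andbF mulr0.
Qed.

Lemma rowF2_neq0 (a : U) : a != 0 -> exists k, a 0 k = 1.
Proof.
move=> a_neq0; suff /existsP [k /eqP ak] : [exists k, a 0 k == 1] by exists k.
apply: contraR a_neq0 => /existsPn a0; apply/eqP/matrixP => i k; rewrite ord1 mxE.
by case: (F2_cases (a 0 k)) => // ak; move: (a0 k); rewrite ak eqxx.
Qed.

Lemma rowF2_oppr (a : U) : - a = a.
Proof. by apply/matrixP => i k; rewrite mxE oppr_pchar2 // pchar_Fp. Qed.

Definition chi (u a : U) : rat := signF2 rat (dotF2 u a).

Lemma chiC (u a : U) : chi u a = chi a u.
Proof. by rewrite /chi dotC. Qed.

Lemma chiDr (u a b : U) : chi u (a + b) = chi u a * chi u b.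
Proof. by rewrite /chi dotDr signF2D. Qed.

Lemma chiDl (u a b : U) : chi (a + b) u = chi a u * chi b u.
Proof. by rewrite /chi dotDl signF2D. Qed.

Lemma chi0r (u : U) : chi u 0 = 1.
Proof. by rewrite /chi dot0r signF2_0. Qed.

Lemma chi0l (a : U) : chi 0 a = 1.
Proof. by rewrite /chi dot0l signF2_0. Qed.

Lemma chi_delta (u : U) (k : 'I_r) : chi u (delta_mx 0 k) = signF2 rat (u 0 k).
Proof. by rewrite /chi dot_delta. Qed.

Lemma sum_chi (a : U) : \sum_(u : U) chi u a = (a == 0)%:R * (2 ^ r)%:R.
Proof.
have [->|/rowF2_neq0 [k ak]] := eqVneq a 0.
  rewrite (eq_bigr (fun _ => 1)) => [|u _]; last exact: chi0r.
  by rewrite sumr_const card_mx card_Fp // mul1n mul1r.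
set S := \sum_u _; suff /eqP : S *+ 2 = 0 by rewrite mul0r mulrn_eq0 => /eqP.
rewrite mulr2n {1}/S (reindex_inj (addIr (delta_mx 0 k))) /= -big_split /=.
rewrite big1 // => u _.
by rewrite chiDl [chi (delta_mx _ _) _]chiC chi_delta ak signF2_1 mulrN1 addNr.
Qed.

End Characters.

Section SquareIdeal.
Variable r : nat.
Local Notation P := {mpoly int[r]}.
Local Notation U := 'rV['F_2]_r.

Definition sq1_ideal (p : P) : Prop :=
  exists q : 'I_r -> P, p = \sum_(k < r) q k * ('X_k ^+ 2 - 1).

Lemma sq1_ideal0 : sq1_ideal 0.
Proof. by exists (fun _ => 0); rewrite big1 // => k _; rewrite mul0r. Qed.

Lemma sq1_idealD p1 p2 : sq1_ideal p1 -> sq1_ideal p2 -> sq1_ideal (p1 + p2).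
Proof.
move=> [q1 ->] [q2 ->]; exists (fun k => q1 k + q2 k).
by rewrite -big_split; apply: eq_bigr => k _; rewrite mulrDl.
Qed.

Lemma sq1_idealMl m p : sq1_ideal p -> sq1_ideal (m * p).
Proof.
move=> [q ->]; exists (fun k => m * q k).
by rewrite mulr_sumr; apply: eq_bigr => k _; rewrite mulrA.
Qed.

Lemma sq1_idealN p : sq1_ideal p -> sq1_ideal (- p).
Proof. by move=> Ip; rewrite -mulN1r; apply: sq1_idealMl. Qed.

Lemma sq1_idealZ (c : int) p : sq1_ideal p -> sq1_ideal (c *: p).
Proof. by move=> Ip; rewrite -[p]mul1r scalerAl; apply: sq1_idealMl. Qed.

Lemma sq1_ideal_sum I (s : seq I) (Q : pred I) (F : I -> P) :
  (forall i, Q i -> sq1_ideal (F i)) -> sq1_ideal (\sum_(i <- s | Q i) F i).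
Proof. by move=> IF; apply: big_ind => //; [exact: sq1_ideal0 | exact: sq1_idealD]. Qed.

Lemma sq1_idealX k : sq1_ideal ('X_k ^+ 2 - 1).
Proof.
exists (fun l => (l == k)%:R).
by rewrite (bigD1 k) //= eqxx mul1r big1 ?addr0 // => l /negbTE ->; rewrite mul0r.
Qed.

Lemma monoF2D (a b : U) : sq1_ideal (monoF2 a * monoF2 b - monoF2 (a + b)).
Proof.
rewrite /monoF2 -big_split /=.
apply: (big_ind2 (fun x y => sq1_ideal (x - y))) => [|x1 x2 y1 y2 Ix Iy|k _].
- by rewrite subrr; exact: sq1_ideal0.
- have -> : x1 * y1 - x2 * y2 = y1 * (x1 - x2) + x2 * (y1 - y2) by ring.
  by apply: sq1_idealD; apply: sq1_idealMl.
- rewrite mxE -exprD.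
  case: (F2_cases (a 0 k)) => ->; case: (F2_cases (b 0 k)) => -> /=;
    rewrite ?subrr; [exact: sq1_ideal0 .. | exact: sq1_idealX].
Qed.

Lemma monoF2_0 : monoF2 (0 : U) = 1.
Proof. by rewrite /monoF2 big1 // => k _; rewrite mxE expr0. Qed.

Lemma monoF2_delta (k : 'I_r) : monoF2 (delta_mx 0 k) = 'X_k.
Proof.
rewrite /monoF2 (bigD1 k) //= mxE !eqxx expr1 big1 ?mulr1 // => l /negbTE nlk.
by rewrite mxE nlk andbF expr0.
Qed.

End SquareIdeal.

Section GroupRing.
Variables (r n : nat) (v : 'I_n -> 'rV['F_2]_r).
Local Notation P := {mpoly int[r]}.
Local Notation U := 'rV['F_2]_r.

Definition laplacian_poly : P := n%:R - \sum_(i < n) monoF2 (v i).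

Lemma in_RG_idealE p :
  in_RG_ideal v p <-> exists q0, sq1_ideal (p - q0 * laplacian_poly).
Proof.
split=> [[q [q0 ->]] | [q0 [q Ip]]]; first by exists q0, q; rewrite addrK.
by exists q, q0; rewrite -Ip subrK.
Qed.

Lemma laplacian_poly_mul (c : U -> int) :
  sq1_ideal ((\sum_(a : U) c a *: monoF2 a) * laplacian_poly
             - \sum_(b : U) (c b *+ n - \sum_(i < n) c (b + v i)) *: monoF2 b).
Proof.
have shift i :
    \sum_(b : U) c (b + v i) *: monoF2 b = \sum_(a : U) c a *: monoF2 (a + v i).
  rewrite (reindex_inj (addIr (v i))) /=; apply: eq_bigr => a _.
  by rewrite -{2}[v i]rowF2_oppr addrK.
have -> : \sum_(b : U) (c b *+ n - \sum_(i < n) c (b + v i)) *: monoF2 b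
    = (\sum_(a : U) c a *: monoF2 a) *+ n
      - \sum_(i < n) \sum_(b : U) c (b + v i) *: monoF2 b.
  rewrite exchange_big -sumrMnl -sumrB.
  by apply: eq_bigr => b _; rewrite scalerBl scalerMnl scaler_suml.
under [X in _ - (_ - X)]eq_bigr do rewrite shift.
rewrite /laplacian_poly mulrBr mulr_natr opprB addrC addrA subrK -opprB; apply: sq1_idealN.
rewrite mulr_sumr -sumrB; apply: sq1_ideal_sum => i _; rewrite mulr_suml -sumrB.
apply: sq1_ideal_sum => a _; rewrite -scalerAl -scalerBr; apply/sq1_idealZ/monoF2D.
Qed.

End GroupRing.

Section CharacterEvaluation.
Variable r : nat.
Local Notation P := {mpoly int[r]}.
Local Notation U := 'rV['F_2]_r.

Definition chi_eval (u : U) : {rmorphism P -> rat} :=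
  intr \o meval (fun k => signF2 int (u 0 k)).

Lemma chi_eval_prodX (u : U) (e : 'I_r -> nat) :
  chi_eval u (\prod_(k < r) 'X_k ^+ e k) = signF2 rat (\sum_(k < r) u 0 k * (e k)%:R).
Proof.
rewrite rmorph_prod signF2_sum; apply: eq_bigr => k _.
by rewrite rmorphXn /= mevalXU rmorph_sign signF2X.
Qed.

Lemma chi_eval_monoF2 (u a : U) : chi_eval u (monoF2 a) = chi u a.
Proof. by rewrite chi_eval_prodX; under eq_bigr do rewrite F2_natr. Qed.

Lemma chi_eval_sq1_ideal (u : U) p : sq1_ideal p -> chi_eval u p = 0.
Proof.
move=> [q ->]; rewrite rmorph_sum big1 // => k _.
rewrite rmorphM rmorphB rmorph1 rmorphXn /= mevalXU rmorph_sign expr2 -signF2D.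
by rewrite addrr_pchar2 ?pchar_Fp // signF2_0 subrr mulr0.
Qed.

Lemma chi_evalZ (u : U) (c : int) p : chi_eval u (c *: p) = c%:~R * chi_eval u p.
Proof. by rewrite /= mevalZ rmorphM. Qed.

Lemma fourier_int (p : P) (a : U) :
  (2 ^ r)%:R^-1 * \sum_(u : U) chi_eval u p * chi u a \is a Num.int.
Proof.
elim/mpolyind: p => [|c m p _ _ IHp].
  by rewrite big1 ?mulr0 // => u _; rewrite rmorph0 mul0r.
under eq_bigr do rewrite rmorphD chi_evalZ mulrDl -mulrA.
rewrite big_split /= mulrDr rpredD // -mulr_sumr mulrCA rpredM ?intr_int //.
have -> : \sum_(u : U) chi_eval u 'X_[m] * chi u a
    = \sum_(u : U) chi u (\row_k (m k)%:R + a).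
  apply: eq_bigr => u _; rewrite mpolyXE_id chi_eval_prodX chiDr; congr (_ * _).
  by congr (signF2 _ _); apply: eq_bigr => k _; rewrite mxE.
rewrite sum_chi mulrCA; case: (_ == 0); last by rewrite mul0r.
by rewrite mul1r mulVf ?pnatr_eq0 ?expn_eq0.
Qed.

End CharacterEvaluation.

Section Eigenvalues.
Variables (r n : nat) (v : 'I_n -> 'rV['F_2]_r).
Local Notation U := 'rV['F_2]_r.

Lemma lambdaF2E (u : U) : lambdaF2 v u = \sum_(i < n) (1 - chi u (v i)).
Proof. by rewrite /lambdaF2 sumrB sumr_const card_ord. Qed.

Lemma chi_eval_laplacian (u : U) : chi_eval u (laplacian_poly v) = lambdaF2 v u.
Proof.
rewrite rmorphB rmorph_nat rmorph_sum.
by under eq_bigr do rewrite chi_eval_monoF2.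
Qed.

Lemma laplacian_chi (u b : U) :
  (1 - chi u b) *+ n - \sum_(i < n) (1 - chi u (b + v i)) = - (chi u b * lambdaF2 v u).
Proof.
have -> : (1 - chi u b) *+ n = \sum_(i < n) (1 - chi u b) by rewrite sumr_const card_ord.
rewrite lambdaF2E mulr_sumr -sumrB -sumrN; apply: eq_bigr => i _; rewrite chiDr; ring.
Qed.

Hypothesis gen : forall u : U, exists c : 'I_n -> 'F_2, u = \sum_(i < n) c i *: v i.

Lemma lambdaF2_gt0 (u : U) : u != 0 -> 0 < lambdaF2 v u.
Proof.
move=> /rowF2_neq0 [k uk]; have [c ek] := gen (delta_mx 0 k).
have [i /eqP ui] : exists i, dotF2 u (v i) == 1.
  apply/existsP; apply: contraT => /existsPn u_orth.
  suff : dotF2 u (delta_mx 0 k) = 0 by rewrite dot_delta uk => /eqP.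
  rewrite ek dot_sumr big1 // => i _; rewrite dotZr.
  by case: (F2_cases (dotF2 u (v i))) (u_orth i) => ->; rewrite ?mulr0 ?eqxx.
have chi_le1 l : 0 <= 1 - chi u (v l).
  rewrite /chi; case: (F2_cases (dotF2 u (v l))) => ->;
  by rewrite ?signF2_0 ?signF2_1 ?subrr.
rewrite lambdaF2E (bigD1 i) //= {1}/chi ui signF2_1 opprK ltr_wpDr //.
exact: sumr_ge0.
Qed.

End Eigenvalues.

Section OrderOfXj.
Variables (r n : nat) (v : 'I_n -> 'rV['F_2]_r) (j : 'I_r) (C : nat).
Local Notation U := 'rV['F_2]_r.
Hypothesis gen : forall u : U, exists c : 'I_n -> 'F_2, u = \sum_(i < n) c i *: v i.
Local Notation ej := (delta_mx 0 j : U).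

Definition Khat (u : U) : rat := C%:R * (1 - chi u ej) / lambdaF2 v u.

Lemma Khat_lambda (u : U) : Khat u * lambdaF2 v u = C%:R * (1 - chi u ej).
Proof.
have [->|u_neq0] := eqVneq u 0; first by rewrite /Khat chi0l subrr !mulr0 !mul0r.
by rewrite divfK // gt_eqF // lambdaF2_gt0.
Qed.

Definition Kcoef (w : U) : rat := C%:R / 2%:R ^ (r%:Z - 2) *
  \sum_(u : U | (dotF2 u w == 1) && (u 0 j == 1)) (lambdaF2 v u)^-1.

Lemma KcoefE (w : U) : Kcoef w = (2 ^ r)%:R^-1 * \sum_(u : U) Khat u * (1 - chi u w).
Proof.
have pow2 : 2%:R ^ (r%:Z - 2) = (2 ^ r)%:R / 4%:R :> rat.
  by rewrite expfzDr // -exprnN natrX expr2 -natrM.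
rewrite /Kcoef pow2 invf_div big_mkcond !mulr_sumr; apply: eq_bigr => u _.
rewrite /Khat chi_delta /chi -!indicatorF2.
by case: (dotF2 u w == 1); case: (u 0 j == 1); rewrite /= ?mulr0 ?mul0r; ring.
Qed.

Lemma integrality_of_ideal :
  in_RG_ideal v (C%:R * ('X_j - 1)) -> integrality_cond v j C.
Proof.
case/in_RG_idealE => q0 /chi_eval_sq1_ideal Iq0 w; rewrite -/(Kcoef w) KcoefE.
have Khat_q0 u : u != 0 -> Khat u = - chi_eval u q0.
  move=> u_neq0; apply: (mulIf (lt0r_neq0 (lambdaF2_gt0 gen u_neq0))).
  move/eqP: (Iq0 u); rewrite rmorphB !rmorphM rmorphB rmorph_nat rmorph1.
  rewrite -monoF2_delta chi_eval_monoF2 chi_eval_laplacian subr_eq0 => /eqP E.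
  by rewrite Khat_lambda mulNr -E -mulrN opprB.
have Khat_w u :
    Khat u * (1 - chi u w) = chi_eval u q0 * chi u w - chi_eval u q0 * chi u 0.
  have [->|u_neq0] := eqVneq u 0; first by rewrite !chi0l !subrr mulr0.
  by rewrite Khat_q0 // chi0r mulr1 mulNr mulrBr mulr1 opprB.
by rewrite (eq_bigr _ (fun u _ => Khat_w u)) sumrB mulrBr rpredB ?fourier_int.
Qed.

Lemma Kcoef_laplacian (b : U) :
  Kcoef b *+ n - \sum_(i < n) Kcoef (b + v i) = C%:R * ((b == ej)%:R - (b == 0)%:R).
Proof.
have term u :
    Khat u * (1 - chi u b) *+ n - \sum_(i < n) Khat u * (1 - chi u (b + v i))
    = C%:R * (chi u (ej + b) - chi u b).
  by rewrite -mulrnAr -mulr_sumr -mulrBr laplacian_chi mulrN mulrCA Khat_lambda chiDr; ring.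
rewrite (eq_bigr _ (fun i _ => KcoefE (b + v i))) KcoefE.
rewrite -mulr_sumr -mulrnAr -mulrBr exchange_big /= -sumrMnl -sumrB.
rewrite (eq_bigr _ (fun u _ => term u)) -mulr_sumr sumrB !sum_chi.
rewrite addr_eq0 rowF2_oppr eq_sym.
by field; rewrite pnatr_eq0 expn_eq0.
Qed.

Lemma ideal_of_integrality :
  integrality_cond v j C -> in_RG_ideal v (C%:R * ('X_j - 1)).
Proof.
move=> Kint; pose c (a : U) : int := Num.floor (Kcoef a).
have cE a : (c a)%:~R = Kcoef a by apply/eqP; rewrite -intrEfloor; exact: Kint.
have c_laplacian b :
    c b *+ n - \sum_(i < n) c (b + v i) = C%:R * ((b == ej)%:R - (b == 0)%:R).
  apply: (@intr_inj rat); rewrite rmorphB rmorphMn rmorph_sum /= cE.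
  by under eq_bigr do rewrite cE; rewrite Kcoef_laplacian rmorphM rmorphB !rmorph_nat.
have sum_delta (e : U) : \sum_(b : U) (b == e)%:R *: monoF2 b = monoF2 e.
  by rewrite (bigD1 e) //= eqxx scale1r big1 ?addr0 // => b /negbTE ->; rewrite scale0r.
have sum_coef :
    \sum_(b : U) (c b *+ n - \sum_(i < n) c (b + v i)) *: monoF2 b = C%:R * ('X_j - 1).
  under eq_bigr do rewrite c_laplacian -scalerA scalerBl.
  by rewrite -scaler_sumr sumrB !sum_delta monoF2_delta monoF2_0 scaler_nat mulr_natl.
apply/in_RG_idealE; exists (\sum_(a : U) c a *: monoF2 a).
by rewrite -sum_coef -opprB; apply/sq1_idealN/laplacian_poly_mul.
Qed.

End OrderOfXj.

Lemma KcoefZ r n (v : 'I_n -> 'rV['F_2]_r) j C w : Kcoef v j C w = C%:R * Kcoef v j 1 w.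
Proof. by rewrite /Kcoef mul1r mulrA. Qed.

Lemma common_denominator (I : finType) (x : I -> rat) :
  exists2 d : nat, (0 < d)%N & forall i, d%:R * x i \is a Num.int.
Proof.
exists (\prod_i `|denq (x i)|)%N => [|i].
  by rewrite prodn_gt0 // => i; rewrite absz_gt0.
rewrite (bigD1 i) //= natrM mulrAC rpredM ?rpred_nat //.
by rewrite natr_absz gtr0_norm ?ltr0z ?denq_gt0 // mulrC -numqE intr_int.
Qed.

Lemma least_pos_exists (P : pred nat) :
  (exists2 C, (0 < C)%N & P C) -> exists C, least_pos P C.
Proof.
move=> [C0 C0_gt0 PC0].
have /ex_minnP[C /andP[C_gt0 PC] minC] : exists C, (0 < C)%N && P C.
  by exists C0; rewrite C0_gt0.
exists C; split=> //; split=> // C' C'_gt0 ltC'C PC'.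
by have := minC C'; rewrite C'_gt0 PC' leqNgt ltC'C => /(_ isT).
Qed.

Lemma least_pos_equiv (P Q : nat -> Prop) C :
  (forall C', P C' <-> Q C') -> least_pos P C -> least_pos Q C.
Proof.
move=> PQ [C_gt0 [/PQ QC minC]]; split=> //; split=> // C' C'_gt0 ltC'C /PQ.
exact: minC.
Qed.

Theorem mainTheorem8 (r n : nat) (v : 'I_n -> 'rV['F_2]_r) (j : 'I_r) :
  (0 < r)%N ->
  (forall i : 'I_n, v i != 0) ->
  (forall u : 'rV['F_2]_r, exists c : 'I_n -> 'F_2, u = \sum_(i < n) c i *: v i) ->
  exists C : nat, is_addorder_xj v j C /\ least_pos (integrality_cond v j) C.
Proof.
move=> _ _ gen.
have [C minC] :
    exists C, least_pos (fun C => is_true [forall w, Kcoef v j C w \is a Num.int]) C.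
  apply: least_pos_exists; have [d d_gt0 dK] := common_denominator (Kcoef v j 1).
  by exists d => //; apply/forallP => w; rewrite KcoefZ.
have intE C' : [forall w, Kcoef v j C' w \is a Num.int] <-> integrality_cond v j C'.
  by split=> /forallP.
exists C; split; apply: least_pos_equiv minC => C'; last exact: intE.
apply: iff_trans (intE C') _.
by split; [exact: ideal_of_integrality | exact: integrality_of_ideal].
Qed.
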